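(* Let $p\in[1,\infty]$, let $Y$ be a complex Banach space, let $(\mathcal G,+)$ be a countable discrete group and $\mathbf X=\ell^p(\mathcal G,Y)$, with $\mathcal P$ and $\mathcal L(\mathbf X,\mathcal P)$ as in the context. Let $(\Omega,\mathcal G,\alpha)$ be a dynamical system and $A:\Omega\to\mathcal L(\mathbf X,\mathcal P)$ a family of operators over it. Then $\sigma^{\mathrm{op}}(A(\omega))=\{A(\nu):\nu\in\Omega\}$ for all pseudoergodic $\omega\in\Omega$. In particular, $A(\omega)$ is self-similar for each pseudoergodic $\omega\in\Omega$.
   Context: $(\mathcal G,+)$ is written additively but need not be abelian. Choose subsets $\mathcal G_n\subseteq\mathcal G$ with $\emptyset\neq\mathcal G_n\neq\mathcal G$, such that for each $m$ there is $N_m$ with $\mathcal G_m\subseteq\mathcal G_n$ for $n\ge N_m$, and $\bigcup_n\mathcal G_n=\mathcal G$; $P_n$ is multiplication by $\mathbf 1_{\mathcal G_n}$, $\mathcal P=(P_n)$. $K\in\mathcal L(\mathbf X)$ is $\mathcal P$-compact if $\|K(I-P_n)\|\to0$ and $\|(I-P_n)K\|\to0$; $\mathcal K(\mathbf X,\mathcal P)$ is the set of these and $\mathcal L(\mathbf X,\mathcal P)=\{A\in\mathcal L(\mathbf X):AK,KA\in\mathcal K(\mathbf X,\mathcal P)\ \forall K\in\mathcal K(\mathbf X,\mathcal P)\}$. $(A_n)$ converges $\mathcal P$-strongly to $A$ ($\mathcal P\text{-}\lim A_n=A$) if $\|K(A_n-A)\|+\|(A_n-A)K\|\to0$ for all $K\in\mathcal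 K(\mathbf X,\mathcal P)$. $V_gx=(x_{h+g})_{h\in\mathcal G}$. $g_n\to\infty$ means $(g_n)$ eventually leaves every finite subset. For $B\in\mathcal L(\mathbf X,\mathcal P)$ and $g=(g_n)$ with $g_n\to\infty$, the limit operator is $B_g:=\mathcal P\text{-}\lim V_{g_n}BV_{-g_n}$ if it exists; $\sigma^{\mathrm{op}}(B)$ is the set of all limit operators of $B$; $B$ is self-similar if $B\in\sigma^{\mathrm{op}}(B)$. A dynamical system $(\Omega,\mathcal G,\alpha)$: $\Omega$ compact metric space, $\alpha$ maps $\mathcal G$ to homeomorphisms of $\Omega$ with $\alpha(g+h)=\alpha(g)\circ\alpha(h)$. $L(\omega)=\{\nu:\exists g_n\to\infty,\ \alpha(g_n)(\omega)\to\nu\}$; $\omega$ is pseudoergodic if $L(\omega)=\Omega$. A family of operators over $(\Omega,\mathcal G,\alpha)$ is $A:\Omega\to\mathcal L(\mathbf X,\mathcal P)$ with $A(\alpha(g)(\omega))=V_gA(\omega)V_{-g}$ for all $\omega,g$, and such that $\omega_n\to\omega$ implies $\mathcal P\text{-}\lim A(\omega_n)=A(\omega)$. *)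

From mathcomp Require Import all_boot all_order all_algebra.
From mathcomp Require Import all_classical all_reals all_analysis.
From mathcomp Require Import complex.
Import Order.TTheory GRing.Theory Num.Theory.

Set Implicit Arguments.
Unset Strict Implicit.
Unset Printing Implicit Defensive.

Local Open Scope classical_set_scope.
Local Open Scope ring_scope.

Record addGroup := AddGroup {
  gcar :> choiceType;
  gadd : gcar -> gcar -> gcar;
  gopp : gcar -> gcar;
  gzero : gcar;
  gaddA : forall a b c, gadd a (gadd b c) = gadd (gadd a b) c;
  gadd0l : forall a, gadd gzero a = a;
  gadd0r : forall a, gadd a gzero = a;
  gaddNl : forall a, gadd (gopp a) a = gzero;
  gaddNr : forall a, gadd a (gopp a) = gzero }.

Section LP.
Context (R : realType) (G : addGroup) (Y : completeNormedModType R[i]).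

(* real-valued norm on Y (the norm of a normed C-module takes values in C) *)
Definition nrm (y : Y) : R := complex.Re `|y|.

(* sequences x : G -> Y; operators are maps on such sequences, only
   their behaviour on l^p(G,Y) matters *)
Definition Op := (G -> Y) -> (G -> Y).

Definition lpnorm (p : \bar R) (x : G -> Y) : \bar R :=
  match p with
  | r%:E => poweR (esum [set: G] (fun g => (powR (nrm (x g)) r)%:E)) r^-1
  | +oo%E => ereal_sup (range (fun g => (nrm (x g))%:E))
  | -oo%E => 0%E
  end.

Definition in_lp (p : \bar R) (x : G -> Y) : Prop := (lpnorm p x < +oo)%E.

Definition op_eq (p : \bar R) (A B : Op) : Prop :=
  forall x, in_lp p x -> A x = B x.

Definition is_bounded (p : \bar R) (T : Op) : Prop :=
  (forall x, in_lp p x -> in_lp p (T x)) /\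
  (forall (a : R[i]) x y, in_lp p x -> in_lp p y ->
     T (fun g => a *: x g + y g) = (fun g => a *: T x g + T y g)) /\
  (exists C : R, forall x, in_lp p x -> (lpnorm p (T x) <= C%:E * lpnorm p x)%E).

Definition opnorm (p : \bar R) (T : Op) : \bar R :=
  ereal_sup [set lpnorm p (T x) | x in [set x | in_lp p x /\ (lpnorm p x <= 1)%E]].

Definition opsub (A B : Op) : Op := fun x g => A x g - B x g.
Definition opcomp (A B : Op) : Op := fun x => A (B x).
Definition opid : Op := fun x => x.

Definition Pn (Gn : nat -> set G) (n : nat) : Op :=
  fun x g => if `[< Gn n g >] then x g else 0.

Definition V (g : G) : Op := fun x h => x (@gadd G h g).

Definition cvg0 (u : nat -> \bar R) : Prop := (u @ \oo --> (0 : \bar R))%E.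

Definition admissible_seq (Gn : nat -> set G) : Prop :=
  (forall n, Gn n !=set0 /\ Gn n != [set: G]) /\
  (forall m, exists N, forall n, (N <= n)%N -> Gn m `<=` Gn n) /\
  \bigcup_n Gn n = [set: G].

Definition Pcompact (p : \bar R) (Gn : nat -> set G) (K : Op) : Prop :=
  is_bounded p K /\
  cvg0 (fun n => opnorm p (opcomp K (opsub opid (Pn Gn n)))) /\
  cvg0 (fun n => opnorm p (opcomp (opsub opid (Pn Gn n)) K)).

Definition in_LXP (p : \bar R) (Gn : nat -> set G) (A : Op) : Prop :=
  is_bounded p A /\
  forall K, Pcompact p Gn K ->
    Pcompact p Gn (opcomp A K) /\ Pcompact p Gn (opcomp K A).

Definition Plim (p : \bar R) (Gn : nat -> set G) (An : nat -> Op) (A : Op) : Prop :=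
  forall K, Pcompact p Gn K ->
    cvg0 (fun n => opnorm p (opcomp K (opsub (An n) A))) /\
    cvg0 (fun n => opnorm p (opcomp (opsub (An n) A) K)).

Definition to_infty (gs : nat -> G) : Prop :=
  forall F : set G, finite_set F -> exists N, forall n, (N <= n)%N -> ~ F (gs n).

Definition limop (p : \bar R) (Gn : nat -> set G) (B : Op) (gs : nat -> G) (C : Op) : Prop :=
  to_infty gs /\ is_bounded p C /\
  Plim p Gn (fun n => opcomp (V (gs n)) (opcomp B (V (@gopp G (gs n))))) C.

Definition in_sigma_op (p : \bar R) (Gn : nat -> set G) (B C : Op) : Prop :=
  exists gs, limop p Gn B gs C.

Definition self_similar (p : \bar R) (Gn : nat -> set G) (B : Op) : Prop :=
  in_sigma_op p Gn B B.

End LP.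

Section Dyn.
Context (R : realType) (G : addGroup) (Om : metricType R).

Definition homeomorphism (f : Om -> Om) : Prop :=
  continuous f /\ exists f' : Om -> Om, continuous f' /\ cancel f f' /\ cancel f' f.

Definition dynamical_system (alpha : G -> Om -> Om) : Prop :=
  compact [set: Om] /\
  (forall g, homeomorphism (alpha g)) /\
  (forall g h, alpha (@gadd G g h) = alpha g \o alpha h).

Definition limit_set (alpha : G -> Om -> Om) (om : Om) : set Om :=
  [set nu | exists gs : nat -> G, to_infty gs /\
     (fun n => alpha (gs n) om) @ \oo --> nu].

Definition pseudoergodic (alpha : G -> Om -> Om) (om : Om) : Prop :=
  limit_set alpha om = [set: Om].

Definition family_of_ops (Y : completeNormedModType R[i]) (p : \bar R)
  (Gn : nat -> set G) (alpha : G -> Om -> Om) (A : Om -> Op G Y) : Prop :=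
  (forall om, in_LXP p Gn (A om)) /\
  (forall om g, op_eq p (A (alpha g om))
     (opcomp (V g) (opcomp (A om) (V (@gopp G g))))) /\
  (forall (oms : nat -> Om) om, oms @ \oo --> om ->
     Plim p Gn (fun n => A (oms n)) (A om)).

End Dyn.

(* If ω is pseudoergodic, every ν ∈ Ω is a limit of α(g_n)ω for some g_n → ∞.
   By covariance A(α(g_n)ω) = V_{g_n} A(ω) V_{-g_n}, and by continuity of the
   family these operators converge P-strongly to A(ν); so A(ν) is a limit
   operator of A(ω).  Conversely, if V_{g_n} A(ω) V_{-g_n} → C P-strongly,
   compactness of Ω gives a subsequence with α(g_{n_k})ω → ν, along which the
   same operators also converge to A(ν).  P-strong limits are unique, because
   the P-compact projections P_m see every coordinate of G; hence C = A(ν). *)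

From mathcomp Require Import all_boot all_order all_algebra.
From mathcomp Require Import all_classical all_reals all_analysis.
From mathcomp Require Import complex.
From mathcomp Require Import lra.
Import Order.TTheory GRing.Theory Num.Theory.
Set Implicit Arguments.
Unset Strict Implicit.
Local Open Scope classical_set_scope.
Local Open Scope ring_scope.
Local Open Scope complex_scope.

Section RealNorm.
Context (R : realType) (Y : completeNormedModType R[i]).

Lemma normE_nrm (y : Y) : `|y| = (nrm y)%:C.
Proof.
rewrite /nrm; have := normr_ge0 y; case: `|y| => a b.
by rewrite lecE /= => /andP[/eqP -> _].
Qed.

Lemma nrm_ge0 (y : Y) : 0 <= nrm y.
Proof. by have := normr_ge0 y; rewrite normE_nrm lecR. Qed.

Lemma nrm0 : nrm (0 : Y) = 0.
Proof. by rewrite /nrm normr0. Qed.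

Lemma nrm_eq0 (y : Y) : nrm y = 0 -> y = 0.
Proof. by move=> y0; apply/normr0_eq0; rewrite normE_nrm y0. Qed.

Lemma nrmD (u v : Y) : nrm (u + v) <= nrm u + nrm v.
Proof. by have := ler_normD u v; rewrite !normE_nrm -rmorphD /= lecR. Qed.

Lemma nrmN (u : Y) : nrm (- u) = nrm u.
Proof. by rewrite /nrm normrN. Qed.

Lemma Re_norm_ge0 (a : R[i]) : 0 <= complex.Re `|a|.
Proof. by have := normr_ge0 a; rewrite lecE => /andP[]. Qed.

Lemma Re_normC (s : R) : 0 <= s -> complex.Re `|s%:C| = s.
Proof. by move=> s0; rewrite normc_def /= expr0n /= addr0 sqrtr_sqr ger0_norm. Qed.

Lemma nrmZ (a : R[i]) (y : Y) : nrm (a *: y) = complex.Re `|a| * nrm y.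
Proof.
rewrite {1}/nrm normrZ normE_nrm [X in X * _]normc_def -rmorphM /=.
by case: a.
Qed.

Lemma nrmZD_le (a : R[i]) (u v : Y) :
  nrm (a *: u + v) <= complex.Re `|a| * nrm u + nrm v.
Proof. by apply: le_trans (nrmD _ _) _; rewrite nrmZ. Qed.

End RealNorm.

Lemma powRD_le (R : realType) (r u v : R) : 0 < r -> 0 <= u -> 0 <= v ->
  (u + v) `^ r <= 2 `^ r * (u `^ r + v `^ r).
Proof.
move=> r0; wlog uv : u v / u <= v.
  move=> H u0 v0; case: (leP u v) => [|/ltW] vu; first exact: H.
  by rewrite addrC [u `^ r + _]addrC; apply: H.
move=> u0 v0; have : (u + v) `^ r <= (2 * v) `^ r.
  by apply: (ge0_ler_powR (ltW r0)); rewrite ?nnegrE; lra.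
rewrite powRM // => /le_trans; apply; apply: ler_wpM2l; first exact: powR_ge0.
by rewrite lerDr powR_ge0.
Qed.

Lemma esumZ_le (R : realType) (T : choiceType) (I : set T) (c : R)
    (f : T -> \bar R) :
  0 <= c -> (forall i, (0 <= f i)%E) ->
  (esum I (fun i => c%:E * f i) <= c%:E * esum I f)%E.
Proof.
move=> c0 f0; apply: ge_ereal_sup => _ [X XI <-].
rewrite -ge0_mule_fsumr //; apply: lee_wpmul2l; first by rewrite lee_fin.
by apply: ereal_sup_ubound; exists X.
Qed.

Section Lp.
Context (R : realType) (G : addGroup) (Y : completeNormedModType R[i]).
Implicit Types (p : \bar R) (x y : G -> Y).

Definition lpsum (r : R) x : \bar R :=
  esum [set: G] (fun g => ((nrm (x g)) `^ r)%:E).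

Lemma lpsum_ge0 r x : (0 <= lpsum r x)%E.
Proof. by apply: esum_ge0 => g _; rewrite lee_fin powR_ge0. Qed.

Lemma in_lpE (r : R) x : 0 < r -> in_lp r%:E x <-> (lpsum r x < +oo)%E.
Proof.
move=> r0; rewrite /in_lp /lpnorm -/(lpsum r x); split; last exact: poweR_lty.
by apply: lty_poweRy; rewrite invr_eq0 gt_eqF.
Qed.

Lemma nrm_le_lpnorm p x g : (1 <= p)%E -> ((nrm (x g))%:E <= lpnorm p x)%E.
Proof.
case: p => [r| |] //= p1; last by apply: ereal_sup_ubound; exists g.
rewrite lee_fin in p1; have r0 : 0 < r by lra.
have : ((nrm (x g) `^ r)%:E <= lpsum r x)%E.
  apply: esum_ge; exists [set g]; first by split; [exact: finite_set1|].
  by rewrite fsbig_set1.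
move=> /(gt0_ler_poweR (r := r^-1)).
rewrite poweR_EFin -powRrM mulfV ?gt_eqF // powRr1 ?nrm_ge0 //; apply.
- by rewrite invr_ge0 ltW.
- by rewrite in_itv /= lee_fin powR_ge0 leey.
- by rewrite in_itv /= lpsum_ge0 leey.
Qed.

Lemma lpnorm_ge0 p x : (1 <= p)%E -> (0 <= lpnorm p x)%E.
Proof.
move=> p1; apply: le_trans (nrm_le_lpnorm x (@gzero G) p1).
by rewrite lee_fin nrm_ge0.
Qed.

Lemma in_lp_fin_num p x : (1 <= p)%E -> in_lp p x -> lpnorm p x \is a fin_num.
Proof. by move=> p1 xp; rewrite ge0_fin_numE ?lpnorm_ge0. Qed.

Lemma le_lpnorm p x y : (1 <= p)%E -> (forall g, nrm (x g) <= nrm (y g)) ->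
  (lpnorm p x <= lpnorm p y)%E.
Proof.
case: p => [r| |] //= p1 xy.
- rewrite lee_fin in p1; have r0 : 0 < r by lra.
  apply: (gt0_ler_poweR (r := r^-1)).
  + by rewrite invr_ge0 ltW.
  + by rewrite in_itv /= lpsum_ge0 leey.
  + by rewrite in_itv /= lpsum_ge0 leey.
  apply: le_esum => g _; rewrite lee_fin.
  by apply: (ge0_ler_powR (ltW r0)); rewrite ?nnegrE ?nrm_ge0 ?xy.
- apply: ge_ereal_sup => _ [g _ <-].
  by apply: le_trans (nrm_le_lpnorm y g (leey _)); rewrite lee_fin xy.
Qed.

Lemma lpnorm0 p : (1 <= p)%E -> lpnorm p (fun _ : G => (0 : Y)) = 0%E.
Proof.
move=> p1; apply/eqP; rewrite eq_le lpnorm_ge0 // andbT.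
move: p p1 => [r| |] //= p1.
- rewrite lee_fin in p1; rewrite esum1 ?poweR0r ?invr_eq0 ?gt_eqF //; try lra.
  by move=> g _; rewrite nrm0 powR0 ?gt_eqF //; lra.
- by apply: ge_ereal_sup => _ [g _ <-]; rewrite nrm0.
Qed.

Lemma in_lp0 p : (1 <= p)%E -> in_lp p (fun _ : G => (0 : Y)).
Proof. by move=> p1; rewrite /in_lp lpnorm0. Qed.

Lemma in_lpZD p (a : R[i]) x y : (1 <= p)%E -> in_lp p x -> in_lp p y ->
  in_lp p (fun g => a *: x g + y g).
Proof.
have c0 := Re_norm_ge0 a; set c := complex.Re `|a|.
case: p => [r| |] //= p1 xp yp.
- rewrite lee_fin in p1; have r0 : 0 < r by lra.
  move: xp yp; rewrite !in_lpE // => xp yp.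
  have termwise g : (((nrm (a *: x g + y g)) `^ r)%:E <=
      (2 `^ r * c `^ r)%:E * ((nrm (x g)) `^ r)%:E +
      (2 `^ r)%:E * ((nrm (y g)) `^ r)%:E)%E.
    rewrite -!EFinM -EFinD lee_fin.
    apply: le_trans (_ : (c * nrm (x g) + nrm (y g)) `^ r <= _).
      apply: (ge0_ler_powR (ltW r0)); rewrite ?nnegrE ?nrm_ge0 ?nrmZD_le //.
      by rewrite addr_ge0 ?mulr_ge0 ?nrm_ge0.
    apply: le_trans (powRD_le r0 _ _) _; rewrite ?mulr_ge0 ?nrm_ge0 //.
    by rewrite powRM ?nrm_ge0 // mulrDr mulrA.
  apply: le_lt_trans (le_esum (fun g _ => termwise g)) _.
  rewrite esumD => [|g _|g _]; last 2 first.
  - by rewrite -EFinM lee_fin !mulr_ge0 ?powR_ge0.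
  - by rewrite -EFinM lee_fin !mulr_ge0 ?powR_ge0.
  have pow_ge0 (z : G -> Y) g : (0 <= ((nrm (z g)) `^ r)%:E)%E.
    by rewrite lee_fin powR_ge0.
  apply: le_lt_trans (leeD (esumZ_le _ _ (pow_ge0 x)) (esumZ_le _ _ (pow_ge0 y))) _;
    rewrite ?mulr_ge0 ?powR_ge0 //.
  by apply: lte_add_pinfty; apply: lte_mul_pinfty => //;
    rewrite lee_fin ?mulr_ge0 ?powR_ge0.
- have xf := in_lp_fin_num (leey _) xp; have yf := in_lp_fin_num (leey _) yp.
  apply: le_lt_trans (_ : (c%:E * lpnorm +oo x + lpnorm +oo y < +oo)%E); last first.
    by apply: lte_add_pinfty => //; apply: lte_mul_pinfty; rewrite ?lee_fin.
  apply: ge_ereal_sup => _ [g _ <-].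
  apply: le_trans (_ : ((c * nrm (x g) + nrm (y g))%:E <= _)%E).
    by rewrite lee_fin nrmZD_le.
  rewrite EFinD EFinM; apply: leeD; last exact: nrm_le_lpnorm (leey _).
  by apply: lee_wpmul2l; [rewrite lee_fin|exact: nrm_le_lpnorm (leey _)].
Qed.

Lemma in_lp_scale_le1 p x : (1 <= p)%E -> in_lp p x ->
  exists2 s : R, 0 < s & (lpnorm p (fun g => s%:C *: x g) <= 1)%E.
Proof.
case: p => [r| |] //= p1 xp.
- rewrite lee_fin in p1; have r0 : 0 < r by lra.
  have xf : lpsum r x \is a fin_num.
    by rewrite ge0_fin_numE ?lpsum_ge0 -?in_lpE.
  set M := fine (lpsum r x); have M0 : 0 <= M by rewrite fine_ge0 ?lpsum_ge0.
  set s := (M + 1)^-1 `^ r^-1.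
  have sr : s `^ r = (M + 1)^-1.
    by rewrite /s -powRrM mulVf ?gt_eqF // powRr1 // invr_ge0; lra.
  exists s; first by rewrite powR_gt0 // invr_gt0; lra.
  rewrite -(poweR1r r^-1) -/(lpsum r _).
  apply: (gt0_ler_poweR (r := r^-1)).
  + by rewrite invr_ge0 ltW.
  + by rewrite in_itv /= lpsum_ge0 leey.
  + by rewrite in_itv /= lee_fin ler01 leey.
  apply: le_trans (_ : ((s `^ r)%:E * lpsum r x <= _)%E).
    apply: le_trans (esumZ_le _ (powR_ge0 _ _) _) => [|g]; last first.
      by rewrite lee_fin powR_ge0.
    apply: le_esum => g _.
    by rewrite -EFinM lee_fin nrmZ Re_normC ?powR_ge0 // powRM ?powR_ge0 ?nrm_ge0.
  rewrite -(fineK xf) -/M -EFinM lee_fin sr ler_pdivrMl; lra.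
- set M := fine (lpnorm +oo x).
  have Mx g : nrm (x g) <= M.
    by rewrite -lee_fin fineK ?in_lp_fin_num //; exact: nrm_le_lpnorm (leey _).
  have M0 : 0 <= M := le_trans (nrm_ge0 _) (Mx (@gzero G)).
  exists (M + 1)^-1; first by rewrite invr_gt0; lra.
  apply: ge_ereal_sup => _ [g _ <-].
  rewrite lee_fin nrmZ Re_normC ?invr_ge0 ?ler_pdivrMl; try lra.
  by have := Mx g; have := nrm_ge0 (x g); lra.
Qed.

End Lp.

Lemma cvg0_lt (R : realType) (u : nat -> \bar R) (e : R) : cvg0 u -> 0 < e ->
  exists N, forall n, (N <= n)%N -> (u n < e%:E)%E.
Proof.
move=> u0 e0; have [N _ uN] := u0 _ (@nbhs_open_ereal_lt R 0 (fun _ => e) e0).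
by exists N => n /uN.
Qed.

Lemma cvg0_sum_ge (R : realType) (u v : nat -> \bar R) (d : R) :
  cvg0 u -> cvg0 v -> (forall n, (d%:E <= u n + v n)%E) -> d <= 0.
Proof.
move=> u0 v0 duv; apply/ler_addgt0Pr => e e0; rewrite add0r.
have e2 : 0 < e / 2 by rewrite divr_gt0.
have [N1 uN] := cvg0_lt u0 e2; have [N2 vN] := cvg0_lt v0 e2.
have := le_lt_trans (duv _) (lteD (uN _ (leq_maxl N1 N2)) (vN _ (leq_maxr N1 N2))).
by rewrite -EFinD lte_fin -splitr => /ltW.
Qed.

Lemma cvg_subseq (T : topologicalType) (u : nat -> T) (l : T) (phi : nat -> nat) :
  (forall k, (k <= phi k)%N) -> u @ \oo --> l -> (u \o phi) @ \oo --> l.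
Proof.
move=> phik ul; apply: cvg_comp ul => P [N _ NP].
by exists N => // k /= Nk; apply/NP/(leq_trans Nk).
Qed.

Lemma compact_cvg_subseq (R : realType) (T : pseudoMetricType R) (u : nat -> T) :
  compact [set: T] ->
  exists (nu : T) (phi : nat -> nat), (forall k, (k <= phi k)%N) /\ (u \o phi) @ \oo --> nu.
Proof.
move=> cT; have [nu [_ nu_clu]] := cT (u @ \oo) _ filterT.
have near_nu k : exists n, (k <= n)%N /\ ball nu (k.+1%:R^-1) (u n).
  have [||y [[n kn <-] nu_y]] := nu_clu [set u n | n in [set n | (k <= n)%N]]
    (ball nu (k.+1%:R^-1)).
  - by exists k => // n /= kn; exists n.
  - by apply: nbhsx_ballx; rewrite invr_gt0 ltr0n.
  by exists n.
have [phi phiP] := choice near_nu; exists nu, phi.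
split=> [k|]; first exact: (phiP k).1.
apply/cvg_ballP => e e0; have [K] := ltr_add_invr e0; rewrite add0r => Ke.
exists K => // k /= Kk; apply: le_ball (phiP k).2; apply: le_trans (ltW Ke).
by rewrite lef_pV2 ?posrE ?ltr0n // ler_nat.
Qed.

Section Operators.
Context (R : realType) (G : addGroup) (Y : completeNormedModType R[i]).
Context (p : \bar R) (Gn : nat -> set G).
Hypothesis p1 : (1 <= p)%E.
Implicit Types (x y : G -> Y) (T K A B C : Op G Y) (An Bn : nat -> Op G Y).

Lemma lpnorm_le_opnorm T x : in_lp p x -> (lpnorm p x <= 1)%E ->
  (lpnorm p (T x) <= opnorm p T)%E.
Proof. by move=> xp x1; apply: ereal_sup_ubound; exists x. Qed.

Lemma eq_opnorm T1 T2 : op_eq p T1 T2 -> opnorm p T1 = opnorm p T2.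
Proof.
move=> T12; rewrite /opnorm; congr ereal_sup.
by apply/seteqP; split => _ [x [xp x1] <-]; exists x => //; rewrite T12.
Qed.

Lemma opnorm0 T : (forall x, in_lp p x -> T x = (fun _ => 0)) -> opnorm p T = 0%E.
Proof.
move=> T0; apply/eqP; rewrite eq_le; apply/andP; split.
  by apply: ge_ereal_sup => _ [x [xp _] <-]; rewrite T0 // lpnorm0.
have := @lpnorm_le_opnorm T _ (in_lp0 G Y p1); rewrite lpnorm0 // lee01.
by move=> /(_ isT); apply: le_trans; exact: lpnorm_ge0.
Qed.

Lemma is_bounded_Pn m : is_bounded p (Pn (Y:=Y) Gn m).
Proof.
have Pn_le x : (lpnorm p (Pn Gn m x) <= lpnorm p x)%E.
  by apply: le_lpnorm => // g; rewrite /Pn; case: ifP; rewrite ?nrm0 ?nrm_ge0.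
split; [|split].
- by move=> x xp; apply: le_lt_trans (Pn_le x) xp.
- move=> a x y _ _; apply: funext => g; rewrite /Pn; case: ifP => // _.
  by rewrite scaler0 addr0.
- by exists 1 => x _; rewrite mul1e.
Qed.

Lemma Pcompact_Pn m : admissible_seq Gn -> Pcompact p Gn (Pn (Y:=Y) Gn m).
Proof.
move=> [_ [Gn_incr _]]; have [N GmGn] := Gn_incr m.
split; first exact: is_bounded_Pn.
split; apply: cvg_near_cst; exists N => // n /= /GmGn Gmn;
  apply: opnorm0 => x _; apply: funext => g;
  rewrite /opcomp /opsub /opid /Pn.
- by case: ifP => // /asboolP /Gmn /asboolP ->; exact: subrr.
- case Gmg: `[< Gn m g >]; last by case: ifP; rewrite subrr.
  by rewrite (asboolT (Gmn g (asboolW Gmg))) subrr.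
Qed.

Lemma is_bounded_eq A C : is_bounded p A -> op_eq p A C -> is_bounded p C.
Proof.
move=> [Ap [Alin [M AM]]] AeqC; split; [|split].
- by move=> x xp; rewrite -AeqC //; apply: Ap.
- move=> a x y xp yp; rewrite -AeqC ?Alin ?AeqC //; exact: in_lpZD.
- by exists M => x xp; rewrite -AeqC //; apply: AM.
Qed.

Lemma eq_Plim An Bn A B :
  (forall n, op_eq p (An n) (Bn n)) -> op_eq p A B ->
  Plim p Gn An A -> Plim p Gn Bn B.
Proof.
move=> AnBn AB AnA K Kc; have [/= KA AK] := AnA K Kc; split.
- congr (cvg0 _): KA; apply: funext => n; apply: eq_opnorm => x xp.
  by rewrite /opcomp /opsub AnBn ?AB.
- congr (cvg0 _): AK; apply: funext => n; apply: eq_opnorm => x xp.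
  have Kxp : in_lp p (K x) by case: Kc => [[Kp _] _]; exact: Kp.
  by rewrite /opcomp /opsub AnBn ?AB.
Qed.

Lemma Plim_subseq An A (phi : nat -> nat) : (forall k, (k <= phi k)%N) ->
  Plim p Gn An A -> Plim p Gn (An \o phi) A.
Proof.
move=> phik AnA K Kc; have [KA AK] := AnA K Kc.
by split; [exact: (cvg_subseq phik KA) | exact: (cvg_subseq phik AK)].
Qed.

Lemma nrm_le_opnorm_Pn m T x g : in_lp p x -> (lpnorm p x <= 1)%E ->
  Gn m g -> ((nrm (T x g))%:E <= opnorm p (opcomp (Pn Gn m) T))%E.
Proof.
move=> xp x1 Gmg; apply: le_trans (lpnorm_le_opnorm _ xp x1).
by have := nrm_le_lpnorm (Pn Gn m (T x)) g p1; rewrite /Pn /opcomp asboolT.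
Qed.

Lemma op_eq_unit_ball A B : is_bounded p A -> is_bounded p B ->
  (forall x, in_lp p x -> (lpnorm p x <= 1)%E -> A x = B x) -> op_eq p A B.
Proof.
move=> [_ [Alin _]] [_ [Blin _]] AB x xp.
have [s s0 sx1] := in_lp_scale_le1 p1 xp.
set sx := fun g => s%:C *: x g.
have sxp : in_lp p sx by apply: le_lt_trans sx1 _; exact: ltey.
have -> : x = (fun g => (s^-1)%:C *: sx g + (fun _ : G => (0 : Y)) g).
  apply: funext => g; rewrite /sx /= scalerA -rmorphM /= mulVf ?gt_eqF //.
  by rewrite scale1r addr0.
have zp := in_lp0 G Y p1.
by rewrite Alin // Blin // !AB // lpnorm0 // lee01.
Qed.

Lemma Plim_unique An B C : admissible_seq Gn ->
  is_bounded p B -> is_bounded p C -> Plim p Gn An B -> Plim p Gn An C ->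
  op_eq p B C.
Proof.
move=> Gn_adm Bb Cb AnB AnC; apply: op_eq_unit_ball => // x xp x1.
apply: funext => g; have [m _ Gmg] : (\bigcup_n Gn n) g by rewrite Gn_adm.2.2.
have [PB _] := AnB _ (Pcompact_Pn m Gn_adm).
have [PC _] := AnC _ (Pcompact_Pn m Gn_adm).
apply/subr0_eq/nrm_eq0/le_anti; rewrite nrm_ge0 andbT.
apply: (cvg0_sum_ge PB PC) => n.
have -> : B x g - C x g = - (An n x g - B x g) + (An n x g - C x g).
  by rewrite opprB addrA subrK.
apply: le_trans (_ : (nrm (An n x g - B x g) + nrm (An n x g - C x g))%:E <= _)%E.
  by rewrite lee_fin -[X in _ <= X + _]nrmN nrmD.
by rewrite EFinD; apply: leeD; apply: (nrm_le_opnorm_Pn (opsub _ _)).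
Qed.

Lemma in_sigma_op_eq (B C D : Op G Y) :
  op_eq p C D -> in_sigma_op p Gn B C -> in_sigma_op p Gn B D.
Proof.
move=> CD [gs [gs_oo [Cb BC]]]; exists gs; split=> //; split.
  exact: is_bounded_eq Cb CD.
exact: eq_Plim (fun n x _ => erefl) CD BC.
Qed.

End Operators.

Section OperatorFamily.
Context (R : realType) (G : addGroup) (Y : completeNormedModType R[i]).
Context (p : \bar R) (Gn : nat -> set G) (Om : metricType R).
Context (alpha : G -> Om -> Om) (A : Om -> Op G Y).
Hypotheses (p1 : (1 <= p)%E) (Gn_adm : admissible_seq Gn).
Hypotheses (cOm : compact [set: Om]) (A_fam : family_of_ops p Gn alpha A).

Lemma in_sigma_op_limit_set om nu :
  limit_set alpha om nu -> in_sigma_op p Gn (A om) (A nu).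
Proof.
move=> [gs [gs_oo om_nu]]; exists gs; split=> //; split.
  exact: (A_fam.1 nu).1.
apply: eq_Plim _ _ (A_fam.2.2 _ _ om_nu) => [n|]; last by move=> x _.
exact: A_fam.2.1.
Qed.

Lemma in_sigma_op_family om (C : Op G Y) :
  in_sigma_op p Gn (A om) C -> exists nu, op_eq p (A nu) C.
Proof.
move=> [gs [_ [Cb omC]]].
have [nu [phi [phik om_nu]]] := compact_cvg_subseq (fun n => alpha (gs n) om) cOm.
exists nu; apply: (Plim_unique p1 Gn_adm (A_fam.1 nu).1 Cb (A_fam.2.2 _ _ om_nu)).
apply: eq_Plim _ _ (Plim_subseq phik omC) => [n x xp|]; last by move=> x _.
by rewrite /= (A_fam.2.1 om (gs (phi n)) x xp).
Qed.

End OperatorFamily.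

Unset Implicit Arguments.

Theorem corollary4p3 (R : realType) (p : \bar R) (Y : completeNormedModType R[i])
  (G : addGroup) (Gn : nat -> set G) (Om : metricType R)
  (alpha : G -> Om -> Om) (A : Om -> Op G Y) :
  (1 <= p)%E ->
  countable [set: gcar G] ->
  admissible_seq Gn ->
  dynamical_system alpha ->
  family_of_ops p Gn alpha A ->
  forall om : Om, pseudoergodic alpha om ->
    (forall C : Op G Y, in_sigma_op p Gn (A om) C <-> exists nu : Om, op_eq p (A nu) C) /\
    self_similar p Gn (A om).
Proof.
move=> p1 _ Gn_adm [cOm _] A_fam om om_pe.
have limit_op nu : in_sigma_op p Gn (A om) (A nu).
  by apply: (in_sigma_op_limit_set A_fam); rewrite om_pe.
split; last exact: limit_op.
move=> C; split; first exact: in_sigma_op_family p1 Gn_adm cOm A_fam om C.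
by move=> [nu AnuC]; apply/(in_sigma_op_eq p1 AnuC)/limit_op.
Qed.
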